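(* Let $\alpha,\beta\in\mathbb R$ with $\alpha+\beta>0$, let $\sigma>0$ and $\gamma,\delta>0$. Set $$\gamma_0:=\begin{cases}0&\text{if }\alpha\ge\frac{1}{4\sigma},\\ -\alpha+\frac1{4\sigma}&\text{if }-\frac1{4\sigma}\le\alpha<\frac1{4\sigma},\\ 2\beta-2\sqrt{(\alpha+\beta)(\beta-\frac1{4\sigma})}&\text{if }\alpha<-\frac1{4\sigma}.\end{cases}$$ Then $\gamma_0\ge\max\{0,-\alpha+\frac1{4\sigma}\}$, and the following are equivalent: (i) $\dfrac{4\gamma\delta(1+\gamma\alpha)(1+\delta\beta)-(\gamma+\delta)^2}{2\gamma\delta^2(\alpha+\beta)}-\dfrac{\gamma}{2\sigma}>0$; (ii) $\frac1\gamma>\gamma_0$ and $\max\{0,\frac1\gamma+2\alpha-2\sqrt\Delta\}<\frac1\delta<\frac1\gamma+2\alpha+2\sqrt\Delta$, where $\Delta:=(\alpha+\beta)(\frac1\gamma+\alpha-\frac1{4\sigma})$. Consequently, there always exist $\gamma,\delta>0$ satisfying (i) and (ii). *)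

From Stdlib Require Export Reals Lra.
Open Scope R_scope.

Definition gamma0 (alpha beta sigma : R) : R :=
  if Rle_dec (/ (4 * sigma)) alpha then 0
  else if Rle_dec (- / (4 * sigma)) alpha then - alpha + / (4 * sigma)
  else 2 * beta - 2 * sqrt ((alpha + beta) * (beta - / (4 * sigma))).

Definition cond_i (alpha beta sigma gamma delta : R) : Prop :=
  (4 * gamma * delta * (1 + gamma * alpha) * (1 + delta * beta) - (gamma + delta) ^ 2)
    / (2 * gamma * delta ^ 2 * (alpha + beta)) - gamma / (2 * sigma) > 0.

Definition Delta (alpha beta sigma gamma : R) : R :=
  (alpha + beta) * (/ gamma + alpha - / (4 * sigma)).

Definition cond_ii (alpha beta sigma gamma delta : R) : Prop :=
  / gamma > gamma0 alpha beta sigma /\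
  Rmax 0 (/ gamma + 2 * alpha - 2 * sqrt (Delta alpha beta sigma gamma)) < / delta /\
  / delta < / gamma + 2 * alpha + 2 * sqrt (Delta alpha beta sigma gamma).

From Stdlib Require Import Psatz.
Open Scope R_scope.

(* Write x = 1/gamma, y = 1/delta, c = 1/(4 sigma) and s = alpha + beta > 0.
   Condition (i) is a positive multiple of
      4 (x + alpha)(y + beta) - (x + y)^2 - 4 c s = 4 D - (y - (x + 2 alpha))^2,
   where D = s (x + alpha - c) is the quantity Delta of the paper.  Hence (i)
   says that y lies strictly inside the interval of radius 2 sqrt D centred at
   x + 2 alpha (which forces D > 0).  Condition (ii) says the same thing,
   together with y > 0 and x > gamma0; the piecewise constant gamma0 is exactly
   the threshold above which D > 0 and the right end x + 2 alpha + 2 sqrt D of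
   the interval is positive, i.e. above which some positive y is admissible. *)

Lemma sqr_lt_4_iff (t D : R) :
  t ^ 2 < 4 * D <-> - (2 * sqrt D) < t < 2 * sqrt D.
Proof.
  assert (hv0 := sqrt_pos D).
  split.
  - intro ht.
    assert (hD : 0 < D) by nra.
    assert (hvv : sqrt D * sqrt D = D) by (apply sqrt_sqrt; lra).
    split; nra.
  - intros [hlo hup].
    destruct (Rle_or_lt D 0) as [hD | hD].
    + rewrite (sqrt_neg_0 D hD) in hlo, hup; lra.
    + assert (hvv : sqrt D * sqrt D = D) by (apply sqrt_sqrt; lra).
      nra.
Qed.

Lemma cond_i_iff_square (alpha beta sigma gamma delta : R)
  (hab : alpha + beta > 0) (hs : sigma > 0) (hg : gamma > 0) (hd : delta > 0) :
  cond_i alpha beta sigma gamma delta <->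
  (/ delta - (/ gamma + 2 * alpha)) ^ 2 < 4 * Delta alpha beta sigma gamma.
Proof.
  unfold cond_i, Delta.
  set (F := 4 * ((alpha + beta) * (/ gamma + alpha - / (4 * sigma)))
            - (/ delta - (/ gamma + 2 * alpha)) ^ 2).
  assert (hF : (4 * gamma * delta * (1 + gamma * alpha) * (1 + delta * beta)
                - (gamma + delta) ^ 2) / (2 * gamma * delta ^ 2 * (alpha + beta))
               - gamma / (2 * sigma) = gamma / (2 * (alpha + beta)) * F).
  { unfold F; field; lra. }
  assert (hpos : gamma / (2 * (alpha + beta)) > 0) by (apply Rdiv_lt_0_compat; lra).
  rewrite hF.
  split; intro h.
  - destruct (Rle_or_lt F 0) as [hle | hlt]; [nra | unfold F in hlt; lra].
  - unfold F; nra.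
Qed.

Section Gamma0.

Variables alpha beta sigma : R.
Hypothesis hab : alpha + beta > 0.
Hypothesis hs : sigma > 0.

(* This identity
   drives both the lower bound on gamma0 and its threshold property. *)
Lemma gamma0_third_regime (hal : alpha < - / (4 * sigma)) :
  let w := sqrt ((alpha + beta) * (beta - / (4 * sigma))) in
  w > alpha + beta /\
  (w - (alpha + beta)) ^ 2
    = (alpha + beta) * ((beta - / (4 * sigma)) + (alpha + beta) - 2 * w).
Proof.
  intro w.
  assert (hbc : beta - / (4 * sigma) > alpha + beta) by lra.
  assert (hww : w * w = (alpha + beta) * (beta - / (4 * sigma)))
    by (apply sqrt_sqrt; nra).
  assert (hw0 : 0 <= w) by apply sqrt_pos.
  split; nra.
Qed.

Lemma gamma0_lower_bound :
  gamma0 alpha beta sigma >= Rmax 0 (- alpha + / (4 * sigma)).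
Proof.
  assert (hc : / (4 * sigma) > 0) by (apply Rinv_0_lt_compat; lra).
  unfold gamma0.
  destruct (Rle_dec (/ (4 * sigma)) alpha).
  - rewrite Rmax_left; lra.
  - rewrite Rmax_right by lra.
    destruct (Rle_dec (- / (4 * sigma)) alpha); [lra |].
    destruct (gamma0_third_regime ltac:(lra)) as [_ hgap].
    assert (0 <= (sqrt ((alpha + beta) * (beta - / (4 * sigma))) - (alpha + beta)) ^ 2)
      by apply pow2_ge_0.
    nra.
Qed.

Lemma gamma0_threshold (gamma : R) (hg : gamma > 0) :
  / gamma > gamma0 alpha beta sigma <->
  0 < Delta alpha beta sigma gamma /\
  0 < / gamma + 2 * alpha + 2 * sqrt (Delta alpha beta sigma gamma).
Proof.
  assert (hc : / (4 * sigma) > 0) by (apply Rinv_0_lt_compat; lra).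
  assert (hx : / gamma > 0) by (apply Rinv_0_lt_compat; lra).
  unfold Delta, gamma0.
  set (x := / gamma) in *.
  set (c := / (4 * sigma)) in *.
  assert (hv0 := sqrt_pos ((alpha + beta) * (x + alpha - c))).
  assert (hvv := sqrt_sqrt ((alpha + beta) * (x + alpha - c))).
  set (v := sqrt ((alpha + beta) * (x + alpha - c))) in *.
  destruct (Rle_dec c alpha); [split; [intros _; split; nra | lra] |].
  destruct (Rle_dec (- c) alpha); [split; [intro; split; nra | intros [hD _]; nra] |].
  assert (hal : alpha < - c) by lra.
  destruct (gamma0_third_regime hal) as [hws hgap]; fold c in hws, hgap.
  set (w := sqrt ((alpha + beta) * (beta - c))) in *.
  split.
  - intro hxw.
    assert (hsu : (alpha + beta) * (x + alpha - c) > (w - (alpha + beta)) ^ 2) by nra.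
    assert (hD : 0 < (alpha + beta) * (x + alpha - c)) by nra.
    assert (hvw : v > w - (alpha + beta)) by (specialize (hvv ltac:(lra)); nra).
    split; lra.
  - intros [hD hup].
    destruct (Rle_or_lt x (2 * beta - 2 * w)) as [hxw | hxw]; [exfalso | exact hxw].
    assert (hsu : (alpha + beta) * (x + alpha - c) <= (w - (alpha + beta)) ^ 2) by nra.
    assert (hvw : v <= w - (alpha + beta)) by (specialize (hvv ltac:(lra)); nra).
    lra.
Qed.

Lemma cond_i_iff_cond_ii (gamma delta : R) (hg : gamma > 0) (hd : delta > 0) :
  cond_i alpha beta sigma gamma delta <-> cond_ii alpha beta sigma gamma delta.
Proof.
  assert (hy : / delta > 0) by (apply Rinv_0_lt_compat; lra).
  rewrite (cond_i_iff_square _ _ _ _ _ hab hs hg hd), sqr_lt_4_iff.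
  unfold cond_ii; rewrite (gamma0_threshold gamma hg).
  set (v := sqrt (Delta alpha beta sigma gamma)).
  split.
  - intros [hlo hup].
    assert (hD : 0 < Delta alpha beta sigma gamma).
    { destruct (Rle_or_lt (Delta alpha beta sigma gamma) 0) as [hle | hlt]; [| exact hlt].
      unfold v in hlo, hup; rewrite (sqrt_neg_0 _ hle) in hlo, hup; lra. }
    repeat split; try lra.
    apply Rmax_lub_lt; lra.
  - intros [_ [hlo hup]].
    assert (hlo' := Rle_lt_trans _ _ _ (Rmax_r 0 _) hlo).
    split; lra.
Qed.

(* Existence: for 1/gamma large, 1/delta at the centre 1/gamma + 2 alpha of the
   admissible interval satisfies (i), since then only Delta > 0 is needed. *)
Lemma cond_i_exists :
  exists gamma delta : R, gamma > 0 /\ delta > 0 /\ cond_i alpha beta sigma gamma delta.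
Proof.
  assert (hc : / (4 * sigma) > 0) by (apply Rinv_0_lt_compat; lra).
  set (x := 2 * Rabs alpha + / (4 * sigma) + 1).
  assert (ha1 := Rle_abs alpha).
  assert (ha2 := Rle_abs (- alpha)); rewrite Rabs_Ropp in ha2.
  assert (hx : x > 0) by (unfold x; lra).
  assert (hy : x + 2 * alpha > 0) by (unfold x; lra).
  assert (hg : / x > 0) by (apply Rinv_0_lt_compat; lra).
  assert (hd : / (x + 2 * alpha) > 0) by (apply Rinv_0_lt_compat; lra).
  exists (/ x), (/ (x + 2 * alpha)).
  repeat split; try assumption.
  rewrite (cond_i_iff_square _ _ _ _ _ hab hs hg hd).
  unfold Delta; rewrite !Rinv_inv.
  assert (x + alpha - / (4 * sigma) > 0) by (unfold x; lra).
  replace (x + 2 * alpha - (x + 2 * alpha)) with 0 by ring.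
  nra.
Qed.

End Gamma0.

Theorem lemma4p4 (alpha beta sigma : R) (hab : alpha + beta > 0) (hs : sigma > 0) :
  gamma0 alpha beta sigma >= Rmax 0 (- alpha + / (4 * sigma)) /\
  (forall gamma delta : R, gamma > 0 -> delta > 0 ->
     (cond_i alpha beta sigma gamma delta <-> cond_ii alpha beta sigma gamma delta)) /\
  (exists gamma delta : R, gamma > 0 /\ delta > 0 /\
     cond_i alpha beta sigma gamma delta /\ cond_ii alpha beta sigma gamma delta).
Proof.
  split; [exact (gamma0_lower_bound _ _ _ hab hs) |].
  split; [intros gamma delta hg hd; exact (cond_i_iff_cond_ii _ _ _ hab hs _ _ hg hd) |].
  destruct (cond_i_exists _ _ _ hab hs) as (gamma & delta & hg & hd & hi).
  exists gamma, delta.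
  split; [exact hg | split; [exact hd | split; [exact hi |]]].
  exact (proj1 (cond_i_iff_cond_ii _ _ _ hab hs _ _ hg hd) hi).
Qed.
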